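(* Let $n\ge1$ and let $D$ be the set of all linear orders $q$ on $[n]$ such that for every triple $i<j<k$ in $[n]$, $i$ is not ranked last among $\{i,j,k\}$ in $q$ and $k$ is not ranked first among $\{i,j,k\}$ in $q$. Then $|D|=F_{n+1}$, where $F_1=F_2=1$ and $F_{m}=F_{m-1}+F_{m-2}$ are the Fibonacci numbers.
   Context: Linear orders on $[n]$ are rankings of the alternatives $1,\dots,n$; ''ranked last/first among $\{i,j,k\}$'' refers to the restriction of the order to these three alternatives. *)

From mathcomp Require Import all_boot all_fingroup.
Set Implicit Arguments. Unset Strict Implicit. Unset Printing Implicit Defensive.

Fixpoint fib (m : nat) : nat :=
  match m with
  | 0 => 0
  | 1 => 1
  | (m'.+1 as m1).+1 => fib m1 + fib m'
  end.

(* A linear order on the n alternatives 'I_n (= {0,...,n-1}, standing for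
   {1,...,n}) is represented by a permutation q : {perm 'I_n}, where q a is the
   rank (position) of alternative a: rank 0 is first (top), rank n-1 is last. *)

Definition ranked_last n (q : {perm 'I_n}) (a b c : 'I_n) : bool :=
  (q b < q a) && (q c < q a).

Definition ranked_first n (q : {perm 'I_n}) (a b c : 'I_n) : bool :=
  (q a < q b) && (q a < q c).

Definition D n : {set {perm 'I_n}} :=
  [set q : {perm 'I_n} | [forall i : 'I_n, forall j : 'I_n, forall k : 'I_n,
     ((i < j) && (j < k)) ==>
       (~~ ranked_last q i j k && ~~ ranked_first q k i j)]].

(* A ranking q lies in D exactly when it moves every alternative by at most one
   position: if q a > a + 1, two later alternatives are ranked ahead of a, which
   makes a last in a forbidden triple, and symmetrically if q a + 1 < a.  Such a
   permutation is a product of disjoint adjacent transpositions (a a+1), hence is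
   determined by the set of the a it moves up; these sets are the tilings of a
   strip of n cells by squares and dominoes, of which there are F_(n+1). *)

From mathcomp Require Import all_boot all_fingroup zify.
Set Implicit Arguments. Unset Strict Implicit. Unset Printing Implicit Defensive.

(* [t] lists, in decreasing order, the left cells of the dominoes of a tiling of
   the cells 0, ..., n-1 by squares and dominoes. *)
Definition tiling (n : nat) (t : seq nat) : bool := path (fun a b => b.+1 < a) n t.

Fixpoint tilings (n : nat) : seq (seq nat) :=
  match n with
  | 0 | 1 => [:: [::]]
  | (m.+1 as m1).+1 => tilings m1 ++ map (cons m) (tilings m)
  end.

Lemma tilingsSS n : tilings n.+2 = tilings n.+1 ++ map (cons n) (tilings n).
Proof. by []. Qed.

Lemma size_tilings n : size (tilings n) = fib n.+1.
Proof.
elim/ltn_ind: n => [[|[|n]]] IH //.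
by rewrite tilingsSS size_cat size_map !IH.
Qed.

Lemma mem_tilings n t : (t \in tilings n) = tiling n t.
Proof.
elim/ltn_ind: n t => [[|[|n]]] IH [|a t] //; rewrite tilingsSS mem_cat IH //=.
apply/orP/andP => [[/andP[lt_an ->]|/mapP[t' t'_n [-> ->]]] | [lt_an t_a]].
- by split; first exact: ltnW.
- by rewrite -IH.
rewrite t_a andbT ltnS; have [|le_na] := ltnP a n; first by left.
have {le_na lt_an} def_a : a = n by lia.
by subst a; right; apply/mapP; exists t; rewrite ?IH.
Qed.

Lemma uniq_tilings n : uniq (tilings n).
Proof.
elim/ltn_ind: n => [[|[|n]]] IH //.
rewrite tilingsSS cat_uniq !IH // map_inj_uniq ?IH // ?andbT; last by move=> ? ? [].
by apply/hasPn => _ /mapP[t _ ->]; rewrite mem_tilings /= ltnn.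
Qed.

Lemma gap_trans : transitive (fun a b : nat => b.+1 < a).
Proof. by move=> b a c /= lt_ba lt_cb; apply: ltn_trans lt_cb (ltnW lt_ba). Qed.

Lemma tilingW m n t : m <= n -> tiling m t -> tiling n t.
Proof. by case: t => //= a t le_mn /andP[/leq_trans->]. Qed.

Lemma tiling_lt n t a : tiling n t -> a \in t -> a.+1 < n.
Proof. by move/(order_path_min gap_trans)/allP; apply. Qed.

Lemma tiling_sorted n t : tiling n t -> sorted gtn t.
Proof. by move/(sub_path (e' := gtn) (fun a b => @ltnW b.+1 a))/path_sorted. Qed.

Lemma sorted_tiling n t : sorted gtn t ->
  {in t, forall a, a.+1 < n} -> {in t, forall a, a.+1 \notin t} -> tiling n t.
Proof.
move=> t_sorted t_lt t_gap.
rewrite /tiling (path_sortedE gap_trans) (introT allP t_lt) (sorted_pairwise gap_trans).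
rewrite (sorted_pairwise (rev_trans ltn_trans)) in t_sorted.
apply: (sub_in_pairwise (P := mem t)) (allss t) t_sorted => a b a_t b_t /= lt_ba.
by rewrite ltn_neqAle lt_ba andbT; apply: contraNneq (t_gap b b_t) => ->.
Qed.

Definition near_identity n (q : {perm 'I_n}) : Prop :=
  forall a : 'I_n, q a <= a.+1 /\ a <= (q a).+1.

Section Ranks.
Variables (n : nat) (q : {perm 'I_n}).

Lemma card_ltn_ord (a : 'I_n) : #|[set j : 'I_n | j < a]| = a.
Proof.
rewrite -sum1_card (eq_bigl (fun j : 'I_n => j < a)) => [|j]; last by rewrite inE.
by rewrite (big_ord_narrow (ltnW (ltn_ord a))) sum1_card card_ord.
Qed.

Lemma card_rank_ltn (a : 'I_n) : #|[set j | q j < q a]| = q a.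
Proof.
have <- : q @^-1: [set y : 'I_n | y < q a] = [set j | q j < q a].
  by apply/setP => j; rewrite !inE.
by rewrite card_preimset ?card_ltn_ord //; apply: perm_inj.
Qed.

Lemma rank_le_later_ahead (a : 'I_n) : q a <= a + #|[set j : 'I_n | a < j & q j < q a]|.
Proof.
rewrite -[X in X <= _]card_rank_ltn -[X in X + _](card_ltn_ord a).
apply: leq_trans (leq_card_setU _ _).1; apply/subset_leq_card/subsetP => j.
rewrite !inE => lt_qj_qa; case: (ltngtP j a) => //= eq_ja.
by rewrite (val_inj eq_ja) ltnn in lt_qj_qa.
Qed.

Lemma le_rank_earlier_behind (a : 'I_n) : a <= q a + #|[set j : 'I_n | j < a & q a < q j]|.
Proof.
rewrite -[X in X + _]card_rank_ltn -[X in X <= _](card_ltn_ord a).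
apply: leq_trans (leq_card_setU _ _).1; apply/subset_leq_card/subsetP => j.
rewrite !inE => lt_ja; rewrite lt_ja /=; case: (ltngtP (q j) (q a)) => //= eq_qj_qa.
by rewrite (perm_inj (val_inj eq_qj_qa)) ltnn in lt_ja.
Qed.

End Ranks.

Section Domain.
Variables (n : nat) (q : {perm 'I_n}).
Hypothesis qD : q \in D n.

Lemma D_triple (i j k : 'I_n) : i < j -> j < k ->
  ~~ ranked_last q i j k /\ ~~ ranked_first q k i j.
Proof.
move=> lt_ij lt_jk; move: qD; rewrite inE => /forallP/(_ i)/forallP/(_ j)/forallP/(_ k).
by rewrite lt_ij lt_jk => /andP.
Qed.

Lemma D_later_ahead_le1 (a : 'I_n) : #|[set j : 'I_n | a < j & q j < q a]| <= 1.
Proof.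
apply/card_le1_eqP => x y; rewrite !inE => /andP[lt_ax qx] /andP[lt_ay qy].
case: (ltngtP x y) => [lt_xy | lt_yx | /val_inj //].
- by case: (D_triple lt_ax lt_xy); rewrite /ranked_last qx qy.
- by case: (D_triple lt_ay lt_yx); rewrite /ranked_last qx qy.
Qed.

Lemma D_earlier_behind_le1 (a : 'I_n) : #|[set j : 'I_n | j < a & q a < q j]| <= 1.
Proof.
apply/card_le1_eqP => x y; rewrite !inE => /andP[lt_xa qx] /andP[lt_ya qy].
case: (ltngtP x y) => [lt_xy | lt_yx | /val_inj //].
- by case: (D_triple lt_xy lt_ya); rewrite /ranked_first qx qy.
- by case: (D_triple lt_yx lt_xa); rewrite /ranked_first qx qy.
Qed.

End Domain.

Lemma DP n (q : {perm 'I_n}) : reflect (near_identity q) (q \in D n).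
Proof.
apply: (iffP idP) => [qD a | near_q]; first split.
- rewrite -(addn1 a); apply: leq_trans (rank_le_later_ahead q a) _.
  by rewrite leq_add2l D_later_ahead_le1.
- rewrite -(addn1 (q a)); apply: leq_trans (le_rank_earlier_behind q a) _.
  by rewrite leq_add2l D_earlier_behind_le1.
rewrite inE; apply/forallP => i; apply/forallP => j; apply/forallP => k.
apply/implyP => /andP[lt_ij lt_jk].
have [le_qi _] := near_q i; have [_ le_k] := near_q k.
have le_qi_qk : q i <= q k by lia.
by rewrite /ranked_last /ranked_first !ltnNge le_qi_qk andbF.
Qed.

Lemma near_identityV n (q : {perm 'I_n}) : near_identity q -> near_identity (q^-1)%g.
Proof. by move=> near_q a; have := near_q ((q^-1)%g a); rewrite permKV; lia. Qed.

Lemma near_identity_swap n (q : {perm 'I_n}) (a b : 'I_n) :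
  near_identity q -> b = a.+1 :> nat -> q a = b -> q b = a.
Proof.
move=> near_q; have [k] := ubnP a; elim: k a b => // k IH a b lt_ak def_b qab.
have [p qpa] : {p | q p = a} by exists ((q^-1)%g a); rewrite permKV.
have [<-//|/eqP ne_pb] := eqVneq p b.
(* Otherwise the preimage p of a, being within distance one of a, is a or a - 1:
   the first contradicts q a = b, the second by induction forces q a = p. *)
have ne_pa : p <> a :> nat.
  move=> /val_inj eq_pa; have: b = a :> nat by rewrite -qab -{1}eq_pa qpa.
  lia.
have def_a : a = p.+1 :> nat.
  have := near_q p; rewrite qpa => ?; have: p <> b :> nat by move/val_inj.
  lia.
have lt_pk : p < k by rewrite -ltnS -def_a.
by case: ne_pb; rewrite -qab (IH p a lt_pk def_a qpa).
Qed.

Lemma near_identity_swapV n (q : {perm 'I_n}) (a b : 'I_n) :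
  near_identity q -> b = a.+1 :> nat -> q b = a -> q a = b.
Proof.
move=> near_q def_b qba; have qVab : (q^-1)%g a = b by rewrite -qba permK.
by rewrite -(near_identity_swap (near_identityV near_q) def_b qVab) permKV.
Qed.

Definition swaps (t : seq nat) (a : nat) : nat :=
  if a \in t then a.+1 else if a.-1 \in t then a.-1 else a.

Lemma swaps_eq_succ t a : (swaps t a == a.+1) = (a \in t).
Proof.
rewrite /swaps; case: ifP => [_|_]; first by rewrite eqxx.
by case: ifP => _; apply/negbTE/eqP; lia.
Qed.

Definition tiling_perm n (t : seq nat) : {perm 'I_n.+1} :=
  (\prod_(a <- t) tperm (inord a) (inord a.+1))%g.

Lemma tiling_permE n t (x : 'I_n.+1) : tiling n.+1 t -> tiling_perm n t x = swaps t x :> nat.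
Proof.
elim: t x => [|a t IH] x; first by rewrite /tiling_perm big_nil perm1.
rewrite /tiling /= -/(tiling a t) => /andP[lt_an t_a].
have t_lt b : b \in t -> b.+1 < a by apply: tiling_lt.
rewrite /tiling_perm big_cons permM IH; last by apply: tilingW t_a; lia.
have a_t : a \notin t by apply/negP => /t_lt; lia.
have Sa_t : a.+1 \notin t by apply/negP => /t_lt; lia.
have Pa_t : a.-1 \notin t by apply/negP => /t_lt; lia.
have val_a : (inord a : 'I_n.+1) = a :> nat by rewrite inordK // ltnW.
have val_a1 : (inord a.+1 : 'I_n.+1) = a.+1 :> nat by rewrite inordK.
case: tpermP => [-> | -> | ne_xa ne_xa1]; rewrite /swaps !inE ?val_a ?val_a1.
- by rewrite eqxx (negbTE Sa_t) (negbTE a_t).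
- by rewrite eqxx (negbTE a_t) (negbTE Pa_t) (gtn_eqF (ltnSn a)) (negbTE Sa_t).
have ne_x_a : x != a :> nat by apply/eqP => eq_xa; apply/ne_xa/val_inj; rewrite /= val_a.
have ne_x_a1 : x != a.+1 :> nat by apply/eqP => eq_xa; apply/ne_xa1/val_inj; rewrite /= val_a1.
by rewrite (negbTE ne_x_a) (_ : x.-1 == a = false) //; apply/eqP; lia.
Qed.

Lemma tiling_perm_near_identity n t : tiling n.+1 t -> near_identity (tiling_perm n t).
Proof.
by move=> t_n x; rewrite tiling_permE // /swaps; case: ifP => _; [|case: ifP => _]; lia.
Qed.

Definition up_tiling n (q : {perm 'I_n.+1}) : seq nat :=
  [seq a <- rev (iota 0 n) | q (inord a) == a.+1 :> nat].

Lemma mem_up_tiling n (q : {perm 'I_n.+1}) a :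
  (a \in up_tiling q) = (a < n) && (q (inord a) == a.+1 :> nat).
Proof. by rewrite mem_filter mem_rev mem_iota andbC. Qed.

Lemma up_tiling_sorted n (q : {perm 'I_n.+1}) : sorted gtn (up_tiling q).
Proof.
by apply: sorted_filter; [exact: rev_trans ltn_trans | rewrite rev_sorted iota_ltn_sorted].
Qed.

Lemma tiling_permK n t : tiling n.+1 t -> up_tiling (tiling_perm n t) = t.
Proof.
move=> t_n; apply: (irr_sorted_eq (rev_trans ltn_trans) ltnn).
- exact: up_tiling_sorted.
- exact: tiling_sorted t_n.
move=> a; rewrite mem_up_tiling; case: ltnP => [lt_an | le_na] /=.
  by rewrite tiling_permE // inordK ?swaps_eq_succ // ltnW.
by apply/esym/negP => /(tiling_lt t_n); rewrite ltnS ltnNge le_na.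
Qed.

Section UpTiling.
Variables (n : nat) (q : {perm 'I_n.+1}).
Hypothesis near_q : near_identity q.

Lemma near_inord a : a <= n -> q (inord a) <= a.+1 /\ a <= (q (inord a)).+1.
Proof. by move=> le_an; have := near_q (inord a); rewrite inordK. Qed.

Lemma up_inordE a : a < n -> (q (inord a) == a.+1 :> nat) = (q (inord a.+1) == a :> nat).
Proof.
move=> lt_an; set b : 'I_n.+1 := inord a; set c : 'I_n.+1 := inord a.+1.
have val_b : b = a :> nat by rewrite inordK // ltnW.
have val_c : c = b.+1 :> nat by rewrite val_b inordK.
rewrite -val_b -val_c.
apply/eqP/eqP => /val_inj.
  by move/(near_identity_swap near_q val_c) => ->.
by move/(near_identity_swapV near_q val_c) => ->.
Qed.

Lemma up_tiling_tiling : tiling n.+1 (up_tiling q).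
Proof.
apply: sorted_tiling; first exact: up_tiling_sorted.
  by move=> a; rewrite mem_up_tiling => /andP[].
move=> a; rewrite !mem_up_tiling => /andP[lt_an]; rewrite up_inordE // => /eqP qa1.
by rewrite qa1; apply/negP => /andP[_ /eqP]; lia.
Qed.

Lemma up_tilingK : tiling_perm n (up_tiling q) = q.
Proof.
apply/permP => x; apply/val_inj; rewrite /= tiling_permE ?up_tiling_tiling //.
rewrite /swaps !mem_up_tiling; have -> : q x = q (inord x) by rewrite inord_val.
case: x => -[|a] lt_an /=.
  have [le_q0 _] := near_inord (leq0n n); have lt_q0n := ltn_ord (q (inord 0)).
  case: (q (inord 0) =P 1 :> nat) => [q0 | ne_q0]; rewrite ?andbT ?andbF /=; last lia.
  by move: lt_q0n; rewrite q0 ltnS => ->.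
have [le_qa le_aq] := near_inord (lt_an : a.+1 <= n).
have lt_qn := ltn_ord (q (inord a.+1)).
case: (q (inord a.+1) =P a.+2 :> nat) => [qa1 | ne_qa1]; rewrite ?andbT ?andbF /=.
  by move: lt_qn; rewrite qa1 ltnS => ->.
have lt_an' : a < n by [].
rewrite up_inordE // lt_an' /=.
by case: eqP => [-> | ne_qa] //; lia.
Qed.

End UpTiling.

Theorem proposition3 (n : nat) : 1 <= n -> #|D n| = fib n.+1.
Proof.
case: n => // n _.
have D_tilings : D n.+1 =i map (tiling_perm n) (tilings n.+1).
  move=> q; apply/DP/mapP => [near_q | [t t_n ->]].
    by exists (up_tiling q); rewrite ?up_tilingK // mem_tilings up_tiling_tiling.
  by apply: tiling_perm_near_identity; rewrite -mem_tilings.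
rewrite (eq_card D_tilings) (card_uniqP _) ?size_map ?size_tilings //.
rewrite map_inj_in_uniq ?uniq_tilings //.
by apply: (can_in_inj (g := @up_tiling n)) => t; rewrite mem_tilings; apply: tiling_permK.
Qed.
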